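(* The transition function $F$, considered as an operator on the real Banach space $\mathcal M(\mathcal P(S))$ of signed Radon measures on $\mathcal P(S)$ with the total variation norm, is linear with operator norm $\|F\|=1$.
   Context: $T$ is an $n\times n$ stochastic matrix (transition matrix of a Markov chain on $S=\{1,\dots,n\}$); $O$ is a finite index set and for each $i\in O$, $M^{(i)}$ is an $n\times m$ stochastic matrix (observation matrix, observations in $V=\{1,\dots,m\}$). $\mathcal P(S)$ is the probability simplex in $\mathbb R^n$, $\delta(x)$ the point mass at $x\in S$. A (measurable) policy $g:\mathcal P(S)\to O$ has preimages $A_i=g^{-1}\{i\}$. $\alpha_{i,y}(z)=(zTM^{(i)})_y$ and, when $\alpha_{i,y}(z)>0$, $r_{i,y}(z)=\frac{\sum_{x,j}M^{(i)}_{x,y}T_{j,x}z_j\delta(x)}{\sum_{x,j}M^{(i)}_{x,y}T_{j,x}z_j}\in\mathcal P(S)$. The transition function is $F(\mu)=\sum_{i\in O}\sum_{y\in V}\int_{A_i}\alpha_{i,y}(z)\,\delta_{r_{i,y}(z)}\,d\mu(z)$ (terms with $\alpha_{i,y}(z)=0$ contribute zero), defined for signed Radon measures $\mu$ on $\mathcal P(S)$; it maps probability measures to probability measures. *)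

From HB Require Import structures.
From mathcomp Require Import all_boot all_order all_algebra.
From mathcomp Require Import all_classical all_reals all_analysis.
Set Implicit Arguments. Unset Strict Implicit. Unset Printing Implicit Defensive.
Import numFieldNormedType.Exports.
Import Order.TTheory GRing.Theory Num.Theory.
Local Open Scope classical_set_scope.
Local Open Scope ring_scope.

(* Row-stochastic matrix (rows indexed by the current state). *)
Definition stochastic (R : realType) (p q : nat) (A : 'M[R]_(p, q)) : Prop :=
  (forall i j, 0 <= A i j) /\ (forall i, \sum_j A i j = 1).

Definition simplex_pred (R : realType) (k : nat) (x : 'rV[R]_k) : bool :=
  [forall j, 0 <= x 0 j] && (\sum_j x 0 j == 1).

Definition simplex (R : realType) (k : nat) := {x : 'rV[R]_k | simplex_pred x}.

Definition deltav (R : realType) (k : nat) (j : 'I_k) : 'rV[R]_k :=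
  \row_l (l == j)%:R.

Lemma deltav_simplex (R : realType) (n : nat) : simplex_pred (deltav R (@ord0 n)).
Proof.
apply/andP; split.
  by apply/forallP => j; rewrite mxE ler0n.
rewrite (bigD1 ord0) //= big1 ?addr0; first by rewrite mxE eqxx.
by move=> j /negPf hj; rewrite mxE hj.
Qed.

Definition ssimplex (R : realType) (n : nat) : Type := simplex R n.+1.
HB.instance Definition _ (R : realType) (n : nat) := Choice.on (ssimplex R n).
HB.instance Definition _ (R : realType) (n : nat) :=
  isPointed.Build (ssimplex R n)
    (@exist _ (@simplex_pred R n.+1) _ (deltav_simplex R n)).

(* Borel sets of P(S) (subspace topology): sigma-algebra generated by the
   traces of the open sets of R^(n.+1). *)
Definition simplex_open (R : realType) (n : nat) : set (set (ssimplex R n)) :=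
  [set (@sval _ _) @^-1` U | U in [set U : set 'rV[R]_n.+1 | open U]].

Definition PS (R : realType) (n : nat) := g_sigma_algebraType (@simplex_open R n).

(* Signed integral w.r.t. a charge, via its Jordan decomposition
   (obtained from a Hahn decomposition; the result does not depend on it). *)
Section signed_integral.
Context d (X : measurableType d) (R : realType).

Definition cint (mu : {charge set X -> \bar R}) (D : set X) (f : X -> \bar R)
    : \bar R :=
  let PNp := cid (Hahn_decomposition mu) in
  let Np := cid (projT2 PNp) in
  (\int[jordan_pos (projT2 Np)]_(x in D) f x -
   \int[jordan_neg (projT2 Np)]_(x in D) f x)%E.

Definition tv_norm (nu : set X -> \bar R) : \bar R :=
  ereal_sup [set s : \bar R | exists (K : nat) (E : nat -> set X),
     [/\ (forall k, measurable (E k)),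
       trivIset [set k | (k < K)%N] E,
       \bigcup_(k in [set k | (k < K)%N]) E k = [set: X] &
       s = (\sum_(k < K) `|nu (E k)|)%E]].
End signed_integral.

Section transition.
Context (R : realType) (n m : nat) (O : finType).
Variables (T : 'M[R]_n.+1) (M : O -> 'M[R]_(n.+1, m)) (g : PS R n -> O).

Definition alpha (i : O) (y : 'I_m) (z : PS R n) : R :=
  ((sval z *m T *m M i) 0 y).

(* r_{i,y}(z) = (M^(i)_{x,y} (zT)_x)_x / alpha_{i,y}(z) (meaningful when
   alpha_{i,y}(z) > 0; elsewhere an irrelevant default value is used) *)
Definition rpost (i : O) (y : 'I_m) (z : PS R n) : PS R n :=
  @insubd _ _ (simplex R n.+1) z (\row_x (M i x y * (sval z *m T) 0 x / alpha i y z)).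

(* F(mu)(B) = sum_i sum_y int_{A_i} alpha_{i,y}(z) delta_{r_{i,y}(z)}(B) dmu(z),
   terms with alpha_{i,y}(z) = 0 contributing zero. *)
Definition Fop (mu : {charge set PS R n -> \bar R}) (B : set (PS R n)) : \bar R :=
  (\sum_(i : O) \sum_(y < m)
     cint mu (g @^-1` [set i] `&` [set z | (0 < alpha i y z)%R]
                `&` rpost i y @^-1` B) (fun z => (alpha i y z)%:E))%E.
End transition.

From HB Require Import structures.
From mathcomp Require Import all_boot all_order all_algebra.
From mathcomp Require Import all_classical all_reals all_analysis.
From mathcomp Require Import ring lra measurable_realfun.
Set Implicit Arguments. Unset Strict Implicit. Unset Printing Implicit Defensive.
Import numFieldNormedType.Exports.
Import Order.TTheory GRing.Theory Num.Theory.
Local Open Scope classical_set_scope.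
Local Open Scope ring_scope.

(* F sends a charge mu = mu+ - mu- (Jordan decomposition) to Fmeasure mu+ -
   Fmeasure mu-, where Fmeasure Q B = sum_(i,y) int_(landing i y B) alpha_(i,y) dQ
   is a measure.  At a belief z only the action g z is active and its observation
   probabilities alpha_(g z, y)(z) sum to one, so Fmeasure preserves total mass.
   Hence ||F mu|| <= Fmeasure mu+ (S) + Fmeasure mu- (S) = mu+(S) + mu-(S) <= ||mu||,
   and F delta_z has total mass 1, so the bound is attained.  Linearity holds
   because the signed integral defining F can be computed from any decomposition
   of mu as a difference of finite measures. *)

Section matrix_continuity.
Context (R : realType).

Lemma continuous_mx_entries (T : topologicalType) k l (f : T -> 'M[R]_(k, l)) x :
  (forall i j, {for x, continuous (fun v => f v i j)}) -> {for x, continuous f}.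
Proof.
move=> f_cont A /= [P PN sub]; apply: (filterS (fun v Hv => sub (f v) Hv)).
by apply: filter_forall => i; apply: filter_forall => j; exact: f_cont.
Qed.

Lemma continuous_mulmx_entry k l (A : 'M[R]_(k, l)) j :
  continuous (fun v : 'rV[R]_k => (v *m A) 0 j).
Proof.
have -> : (fun v : 'rV[R]_k => (v *m A) 0 j) =
    (fun v => \sum_(i <- index_enum 'I_k | true) v 0 i * A i j).
  by apply/funext => v; rewrite mxE.
apply: continuous_big => [|i _]; first exact: add_continuous.
move=> v; apply: (@continuousM _ _ (fun w : 'rV[R]_k => w 0 i) (cst (A i j))).
  exact: coord_continuous.
exact: cst_continuous.
Qed.
End matrix_continuity.

Section finite_measure_facts.
Context d (X : measurableType d) (R : realType).
Local Open Scope ereal_scope.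

Lemma fin_num_measure_le_setT (Q : {measure set X -> \bar R}) A :
  Q setT \is a fin_num -> measurable A -> Q A \is a fin_num.
Proof.
move=> QT mA; rewrite ge0_fin_numE // (@le_lt_trans _ _ (Q setT)) ?ltey_eq ?QT //.
by apply: le_measure; rewrite ?inE.
Qed.

Lemma fin_num_measure_add (Q1 Q2 : {measure set X -> \bar R}) A :
  Q1 A \is a fin_num -> Q2 A \is a fin_num -> measure_add Q1 Q2 A \is a fin_num.
Proof. by rewrite measure_addE fin_numD => -> ->. Qed.

Lemma fin_num_sub_eq (a b a' b' : \bar R) :
  a \is a fin_num -> b \is a fin_num -> a' \is a fin_num -> b' \is a fin_num ->
  a - b = a' - b' -> a + b' = a' + b.
Proof.
move: a b a' b' => [a| |] [b| |] [a'| |] [b'| |] //= _ _ _ _ [] ab.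
by congr EFin; lra.
Qed.
End finite_measure_facts.

Section charge_jordan.
Context d (X : measurableType d) (R : realType).
Local Open Scope ereal_scope.

Definition jpos (mu : {charge set X -> \bar R}) :=
  jordan_pos (projT2 (cid (projT2 (cid (Hahn_decomposition mu))))).
Definition jneg (mu : {charge set X -> \bar R}) :=
  jordan_neg (projT2 (cid (projT2 (cid (Hahn_decomposition mu))))).

Lemma charge_jposneg (mu : {charge set X -> \bar R}) A :
  measurable A -> mu A = jpos mu A - jneg mu A.
Proof.
move=> mA.
rewrite [LHS](jordan_decomp (projT2 (cid (projT2 (cid (Hahn_decomposition mu))))) mA).
rewrite /cadd cscaleN1.
by congr (_ + _); rewrite /jneg /= [LHS]/cscale mulN1e.
Qed.
End charge_jordan.

Section signed_integral_theory.
Context d (X : measurableType d) (R : realType).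
Variables (D : set X) (f : X -> R) (c : R).
Hypotheses (mD : measurable D) (mf : measurable_fun D f)
  (f_ge0 : forall x, 0 <= f x) (f_le : forall x, f x <= c).
Local Open Scope ereal_scope.

Let mfE : measurable_fun D (fun x => (f x)%:E).
Proof. exact/measurable_EFinP. Qed.

Let fE_ge0 x : D x -> 0 <= (f x)%:E.
Proof. by rewrite lee_fin. Qed.

Lemma fin_num_integral_bounded (Q : {measure set X -> \bar R}) :
  Q setT \is a fin_num -> \int[Q]_(x in D) (f x)%:E \is a fin_num.
Proof.
move=> QT; rewrite ge0_fin_numE; last exact: integral_ge0.
apply: (@le_lt_trans _ _ (\int[Q]_(x in D) (cst c%:E x))).
  by apply: ge0_le_integral => // x _; rewrite lee_fin.
by rewrite integral_cst // ltey_eq fin_numM // fin_num_measure_le_setT.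
Qed.

Lemma Rintegral_measure_add (Q1 Q2 : {measure set X -> \bar R}) :
  Q1 setT \is a fin_num -> Q2 setT \is a fin_num ->
  (\int[measure_add Q1 Q2]_(x in D) f x =
   \int[Q1]_(x in D) f x + \int[Q2]_(x in D) f x)%R.
Proof.
move=> Q1T Q2T; rewrite /Rintegral ge0_integral_measure_add //.
by rewrite fineD //; exact: fin_num_integral_bounded.
Qed.

Lemma Rintegral_mscale (k : {nonneg R}) (Q : {measure set X -> \bar R}) :
  Q setT \is a fin_num ->
  (\int[mscale k Q]_(x in D) f x = k%:num * \int[Q]_(x in D) f x)%R.
Proof.
move=> QT; rewrite /Rintegral ge0_integral_mscale //.
by rewrite fineM //; exact: fin_num_integral_bounded.
Qed.

Lemma Rintegral_diff_eq (P1 N1 P2 N2 : {measure set X -> \bar R}) :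
  P1 setT \is a fin_num -> N1 setT \is a fin_num ->
  P2 setT \is a fin_num -> N2 setT \is a fin_num ->
  (forall A, measurable A -> P1 A + N2 A = P2 A + N1 A) ->
  (\int[P1]_(x in D) f x - \int[N1]_(x in D) f x =
   \int[P2]_(x in D) f x - \int[N2]_(x in D) f x)%R.
Proof.
move=> P1T N1T P2T N2T PN.
have : (\int[P1]_(x in D) f x + \int[N2]_(x in D) f x =
        \int[P2]_(x in D) f x + \int[N1]_(x in D) f x)%R.
  rewrite -!Rintegral_measure_add //; congr fine.
  apply: eq_measure_integral => A mA _.
  transitivity (P1 A + N2 A); first exact: measure_addE.
  transitivity (P2 A + N1 A); first exact: PN.
  symmetry; exact: measure_addE.
lra.
Qed.

Definition Rcint (mu : {charge set X -> \bar R}) : R :=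
  (\int[jpos mu]_(x in D) f x - \int[jneg mu]_(x in D) f x)%R.

Lemma cintE (mu : {charge set X -> \bar R}) :
  cint mu D (fun x => (f x)%:E) = (Rcint mu)%:E.
Proof.
by rewrite /cint /Rcint /Rintegral EFinB !fineK //;
  apply: fin_num_integral_bounded; exact: fin_num_measure.
Qed.

Lemma Rcint_decomp (mu : {charge set X -> \bar R}) (P N : {measure set X -> \bar R}) :
  P setT \is a fin_num -> N setT \is a fin_num ->
  (forall A, measurable A -> mu A = P A - N A) ->
  Rcint mu = (\int[P]_(x in D) f x - \int[N]_(x in D) f x)%R.
Proof.
move=> PT NT muE; apply: Rintegral_diff_eq => //; try exact: fin_num_measure.
move=> A mA; apply: fin_num_sub_eq; rewrite -?charge_jposneg -?muE //;
  (exact: fin_num_measure || exact: fin_num_measure_le_setT).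
Qed.

Lemma RcintD (mu nu : {charge set X -> \bar R}) :
  Rcint (cadd mu nu) = (Rcint mu + Rcint nu)%R.
Proof.
rewrite (@Rcint_decomp _ (measure_add (jpos mu) (jpos nu))
                         (measure_add (jneg mu) (jneg nu))).
- by rewrite !Rintegral_measure_add ?fin_num_measure // /Rcint; ring.
- by apply: fin_num_measure_add; exact: fin_num_measure.
- by apply: fin_num_measure_add; exact: fin_num_measure.
move=> A mA; transitivity (mu A + nu A); first by [].
transitivity ((jpos mu A + jpos nu A) - (jneg mu A + jneg nu A)).
  rewrite (charge_jposneg mu mA) (charge_jposneg nu mA) oppeD.
    exact: addeACA.
  by apply: fin_num_adde_defr; exact: fin_num_measure.
by congr (_ - _); symmetry; exact: measure_addE.
Qed.

Lemma RcintZ (a : R) (mu : {charge set X -> \bar R}) :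
  Rcint (cscale a mu) = (a * Rcint mu)%R.
Proof.
have jdef A : measurable A -> jpos mu A +? - jneg mu A.
  by move=> mA; apply: fin_num_adde_defr; exact: fin_num_measure.
have [a0|a0] := leP 0%R a.
- rewrite (@Rcint_decomp _ (mscale (NngNum a0) (jpos mu)) (mscale (NngNum a0) (jneg mu))).
  + by rewrite !Rintegral_mscale ?fin_num_measure //= /Rcint mulrBr.
  + exact: fin_num_measure.
  + exact: fin_num_measure.
  move=> A mA; transitivity (a%:E * mu A); first by [].
  by rewrite (charge_jposneg mu mA) muleBr ?jdef.
- have na0 : (0 <= - a)%R by rewrite oppr_ge0 ltW.
  rewrite (@Rcint_decomp _ (mscale (NngNum na0) (jneg mu)) (mscale (NngNum na0) (jpos mu))).
  + by rewrite !Rintegral_mscale ?fin_num_measure //= /Rcint; ring.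
  + exact: fin_num_measure.
  + exact: fin_num_measure.
  move=> A mA; transitivity (a%:E * mu A); first by [].
  rewrite (charge_jposneg mu mA) muleBr ?jdef //.
  transitivity ((- a)%:E * jneg mu A - (- a)%:E * jpos mu A); last by [].
  by rewrite EFinN !mulNe oppeK addeC.
Qed.
End signed_integral_theory.

Section total_variation.
Context d (X : measurableType d) (R : realType).
Local Open Scope ereal_scope.

Lemma measure_partition_sum (Q : {measure set X -> \bar R}) K (E : nat -> set X) :
  (forall k, measurable (E k)) -> trivIset [set k | (k < K)%N] E ->
  \bigcup_(k in [set k | (k < K)%N]) E k = [set: X] ->
  \sum_(k < K) Q (E k) = Q setT.
Proof.
move=> mE tE EX.
by rewrite -(@measure_semi_additive_ord_I _ _ _ Q E K) //; rewrite -bigcup_mkord EX.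
Qed.

Lemma tv_norm_diff_le (nu : set X -> \bar R) (P N : {measure set X -> \bar R}) :
  (forall A, measurable A -> nu A = P A - N A) -> tv_norm nu <= P setT + N setT.
Proof.
move=> nuE; apply: ub_ereal_sup => _ [K [E [mE tE EX ->]]].
rewrite -!(measure_partition_sum _ mE tE EX) -big_split /=.
apply: lee_sum => k _; rewrite nuE //.
by apply: (le_trans (lee_abs_sub _ _)); rewrite !gee0_abs.
Qed.

Lemma abs_le_tv_norm (nu : set X -> \bar R) : `|nu setT| <= tv_norm nu.
Proof.
apply: ereal_sup_ubound; exists 1%N, (fun=> setT); split => //.
- by apply/trivIsetP => -[|i] [|j].
- by apply/seteqP; split => // x _; exists 0%N.
- by rewrite big_ord1.
Qed.

Lemma tv_norm_measure (Q : {measure set X -> \bar R}) : tv_norm Q = Q setT.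
Proof.
apply/eqP; rewrite eq_le; apply/andP; split.
  have := @tv_norm_diff_le Q Q mzero (fun A _ => esym (sube0 (Q A))).
  by rewrite adde0.
by rewrite -[leLHS]gee0_abs //; exact: abs_le_tv_norm.
Qed.

Lemma jordan_le_tv_norm (mu : {charge set X -> \bar R}) P N
    (muPN : hahn_decomposition mu P N) :
  jordan_pos muPN setT + jordan_neg muPN setT <= tv_norm mu.
Proof.
have [[mP posP] [mN negN] PUN PIN] := muPN.
have jposE : jordan_pos muPN setT = mu P.
  by rewrite jordan_posE cjordan_posE /crestr0 mem_set //= /crestr setTI.
have jnegE : jordan_neg muPN setT = - mu N.
  by rewrite jordan_negE cjordan_negE /crestr0 mem_set //= /crestr setTI.
apply: (@le_trans _ _ (mu P - mu N)); first by rewrite -jposE -jnegE.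
apply: ereal_sup_ubound => /=.
exists 2%N, (fun k => if k == 0%N then P else if k == 1%N then N else set0); split.
- by move=> k; case: ifP => // _; case: ifP.
- by apply/trivIsetP => -[|[|i]] [|[|j]] //= _ _ _; rewrite setIC PIN.
- apply/seteqP; split => // x _.
  have : (P `|` N) x by rewrite PUN.
  by case=> Px; [exists 0%N | exists 1%N].
- rewrite big_ord_recr big_ord_recr big_ord0 /= add0e.
  by rewrite gee0_abs ?posP // lee0_abs ?negN.
Qed.
End total_variation.

Section stochastic_rows.
Context (R : realType) (k l : nat) (A : 'M[R]_(k, l)).
Hypothesis hA : stochastic A.

Lemma stochastic_mulmx_ge0 (v : 'rV[R]_k) j :
  (forall i, 0 <= v 0 i) -> 0 <= (v *m A) 0 j.
Proof. by move=> v0; rewrite mxE; apply: sumr_ge0 => i _; rewrite mulr_ge0 ?hA.1. Qed.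

Lemma stochastic_mulmx_sum (v : 'rV[R]_k) :
  \sum_j v 0 j = 1 -> \sum_j (v *m A) 0 j = 1.
Proof.
move=> v1; under eq_bigr do rewrite mxE.
by rewrite exchange_big -[RHS]v1; apply: eq_bigr => i _; rewrite -mulr_sumr hA.2 mulr1.
Qed.
End stochastic_rows.

Section simplex_measurability.
Context (R : realType) (n : nat).

Lemma simplex_ge0 (z : PS R n) j : 0 <= sval z 0 j.
Proof. by have /andP[/forallP z0 _] := svalP z. Qed.

Lemma simplex_sum1 (z : PS R n) : \sum_j sval z 0 j = 1.
Proof. by have /andP[_ /eqP] := svalP z. Qed.

Lemma measurable_PS_open (U : set 'rV[R]_n.+1) :
  open U -> measurable ((@sval _ _ : PS R n -> _) @^-1` U).
Proof. by move=> oU; apply: sub_sigma_algebra; exists U. Qed.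

Lemma measurable_PS_continuous (h : 'rV[R]_n.+1 -> R) :
  continuous h -> measurable_fun setT (fun z : PS R n => h (sval z)).
Proof.
move=> h_cont; apply: (measurability _ (RGenOpens.measurableE R)).
move=> _ [_ [a [b ->]] <-]; rewrite setTI.
apply: (measurable_PS_open (U := h @^-1` `]a, b[%classic)).
by move/continuousP: h_cont; apply; exact: interval_open.
Qed.
End simplex_measurability.

Section semi_sigma_additive_sum.
Context d (X : measurableType d) (R : realType) (I : Type).
Local Open Scope ereal_scope.

Lemma semi_sigma_additive_sum (s : seq I) (f : I -> set X -> \bar R) :
  (forall k B, 0 <= f k B) -> (forall k, semi_sigma_additive (f k)) ->
  semi_sigma_additive (fun B => \sum_(k <- s) f k B).
Proof.
move=> f0 f_ssa F mF tF mUF; elim: s => [|a s ih].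
  rewrite big_nil (_ : (fun N => _) = cst 0); first exact: cvg_cst.
  by apply/funext => N; rewrite big1 // => j _; rewrite big_nil.
under eq_fun do (under eq_bigr do rewrite big_cons; rewrite big_split).
rewrite big_cons; apply: cvgeD => //; last exact: f_ssa.
by apply: ge0_adde_def; rewrite inE ?f0 ?sume_ge0.
Qed.
End semi_sigma_additive_sum.

Section belief_transition.
Context (R : realType) (n m : nat) (O : finType).
Variables (T : 'M[R]_n.+1) (M : O -> 'M[R]_(n.+1, m)) (g : PS R n -> O).
Hypotheses (hT : stochastic T) (hM : forall i, stochastic (M i))
  (hg : forall i : O, measurable (g @^-1` [set i])).
Local Notation X := (PS R n).
Local Notation alpha := (alpha T M).
Local Notation rpost := (rpost T M).

Definition obs_prob i y (v : 'rV[R]_n.+1) : R := (v *m T *m M i) 0 y.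

Definition posterior_row i y (v : 'rV[R]_n.+1) : 'rV[R]_n.+1 :=
  \row_x (M i x y * (v *m T) 0 x / obs_prob i y v).

Lemma continuous_obs_prob i y : continuous (obs_prob i y).
Proof.
have -> : obs_prob i y = fun v => (v *m (T *m M i)) 0 y.
  by apply/funext => v; rewrite /obs_prob mulmxA.
exact: continuous_mulmx_entry.
Qed.

Lemma continuous_posterior_row i y v :
  obs_prob i y v != 0 -> {for v, continuous (posterior_row i y)}.
Proof.
move=> v_neq0; apply: continuous_mx_entries => i0 j; rewrite (ord1 i0).
have -> : (fun w => posterior_row i y w 0 j) =
    (cst (M i j y) \* (fun w => (w *m T) 0 j)) \* (fun w => (obs_prob i y w)^-1).
  by apply/funext => w; rewrite mxE.
apply: continuousM; first apply: continuousM.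
- exact: cst_continuous.
- exact: continuous_mulmx_entry.
- by apply: continuousV v_neq0 _; exact: continuous_obs_prob.
Qed.

Lemma obs_prob_ge0 i y (v : 'rV[R]_n.+1) :
  (forall j, 0 <= v 0 j) -> 0 <= obs_prob i y v.
Proof.
by move=> v0; apply: (stochastic_mulmx_ge0 (hM i)) => j; exact: stochastic_mulmx_ge0.
Qed.

Lemma posterior_row_simplex i y (v : 'rV[R]_n.+1) : (forall j, 0 <= v 0 j) ->
  0 < obs_prob i y v -> simplex_pred (posterior_row i y v).
Proof.
move=> v0 v_pos; apply/andP; split.
  apply/forallP => j; rewrite mxE divr_ge0 ?(ltW v_pos) // mulr_ge0 ?(hM i).1 //.
  exact: stochastic_mulmx_ge0.
apply/eqP; under eq_bigr do rewrite mxE.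
rewrite -mulr_suml [S in S / _](_ : _ = obs_prob i y v) ?mulfV ?gt_eqF //.
by rewrite /obs_prob [RHS]mxE; apply: eq_bigr => j _; rewrite mulrC.
Qed.

Lemma rpostE i y z : 0 < alpha i y z ->
  sval (rpost i y z) = posterior_row i y (sval z).
Proof.
move=> z_pos; rewrite /rpost insubdK //.
exact: posterior_row_simplex (@simplex_ge0 _ _ z) z_pos.
Qed.

Lemma alpha_ge0 i y z : 0 <= alpha i y z.
Proof. exact: obs_prob_ge0 (@simplex_ge0 _ _ z). Qed.

Lemma alpha_sum1 i z : \sum_y alpha i y z = 1.
Proof.
apply: (stochastic_mulmx_sum (hM i)); apply: (stochastic_mulmx_sum hT).
exact: simplex_sum1.
Qed.

Lemma alpha_le1 i y z : alpha i y z <= 1.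
Proof.
by rewrite -(alpha_sum1 i z) (bigD1 y) //= lerDl sumr_ge0 // => k _; exact: alpha_ge0.
Qed.

Lemma measurable_alpha i y : measurable_fun setT (alpha i y).
Proof. exact: measurable_PS_continuous (@continuous_obs_prob i y). Qed.

Lemma measurable_alpha_gt0 i y : measurable [set z : X | 0 < alpha i y z].
Proof.
rewrite (_ : [set z | _] = setT `&` alpha i y @^-1` `]0, +oo[%classic).
  exact: measurable_alpha measurableT _ (measurable_itv _).
by apply/seteqP; split => z /=; rewrite in_itv /= andbT // => -[].
Qed.

Lemma measurable_rpost i y : measurable_fun [set z : X | 0 < alpha i y z] (rpost i y).
Proof.
apply: (@measurability _ _ X X _ _ (@simplex_open R n) erefl).
move=> _ [_ [U oU <-] <-].
have -> : [set z | 0 < alpha i y z] `&` rpost i y @^-1` (sval @^-1` U) =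
    sval @^-1` [set v | 0 < obs_prob i y v /\ U (posterior_row i y v)].
  by apply/seteqP; split => z /= [z_pos Uz]; split; rewrite // ?rpostE // -rpostE.
apply: measurable_PS_open; rewrite openE => v /= [v_pos Uv].
rewrite /interior; near=> w; split; near: w.
  exact: (@cvgr_gt _ _ _ _ (obs_prob i y) _ (@continuous_obs_prob i y v) 0 v_pos).
by apply: continuous_posterior_row (lt0r_neq0 v_pos) _ _; apply: open_nbhs_nbhs.
Unshelve. all: by end_near.
Qed.

Definition landing i y (B : set X) : set X :=
  g @^-1` [set i] `&` [set z | 0 < alpha i y z] `&` rpost i y @^-1` B.

Lemma measurable_landing i y B : measurable B -> measurable (landing i y B).
Proof.
move=> mB; rewrite /landing -setIA; apply: measurableI => //.
exact: (measurable_rpost (measurable_alpha_gt0 i y) mB).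
Qed.

Local Open Scope ereal_scope.

Lemma measurable_alphaE i y D : measurable_fun D (fun z => (alpha i y z)%:E).
Proof. by apply/measurable_EFinP; apply: measurable_funTS; exact: measurable_alpha. Qed.

Lemma alphaE_ge0 i y z : 0 <= (alpha i y z)%:E.
Proof. by rewrite lee_fin alpha_ge0. Qed.

Definition branch (Q : {measure set X -> \bar R}) i y B :=
  \int[Q]_(z in landing i y B) (alpha i y z)%:E.

Definition Fmeasure (Q : {measure set X -> \bar R}) B :=
  \sum_i \sum_(y < m) branch Q i y B.

Section Fmeasure_measure.
Variable Q : {measure set X -> \bar R}.

Lemma branch_ge0 i y B : 0 <= branch Q i y B.
Proof. by apply: integral_ge0 => z _; exact: alphaE_ge0. Qed.

Lemma branch_sigma_additive i y : semi_sigma_additive (branch Q i y).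
Proof.
move=> F mF tF mUF.
have landingU : landing i y (\bigcup_k F k) = \bigcup_k landing i y (F k).
  by rewrite /landing preimage_bigcup setI_bigcupr.
rewrite /branch landingU.
have := @semi_sigma_additive_nng_induced _ _ R Q _ (@measurable_alphaE i y setT)
  (@alphaE_ge0 i y) (fun k => landing i y (F k)).
apply.
- by move=> k; exact: measurable_landing.
- apply/trivIsetP => j k _ _ jk; apply/seteqP; split => // z /= [[_ Fj] [_ Fk]].
  have : (F j `&` F k) (rpost i y z) by [].
  by move/trivIsetP: tF => /(_ j k I I jk) ->.
- by rewrite -landingU; exact: measurable_landing.
Qed.

Let Fmeasure0 : Fmeasure Q set0 = 0.
Proof.
rewrite /Fmeasure big1 // => i _; rewrite big1 // => y _.
by rewrite /branch /landing preimage_set0 setI0 integral_set0.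
Qed.

Let Fmeasure_ge0 B : 0 <= Fmeasure Q B.
Proof. by rewrite sume_ge0 // => i _; rewrite sume_ge0 // => y _; exact: branch_ge0. Qed.

Let Fmeasure_sigma_additive : semi_sigma_additive (Fmeasure Q).
Proof.
apply: semi_sigma_additive_sum => [i B|i].
  by rewrite sume_ge0 // => y _; exact: branch_ge0.
apply: semi_sigma_additive_sum => [y B|y]; first exact: branch_ge0.
exact: branch_sigma_additive.
Qed.

HB.instance Definition _ :=
  isMeasure.Build _ _ _ (Fmeasure Q) Fmeasure0 Fmeasure_ge0 Fmeasure_sigma_additive.
End Fmeasure_measure.

Lemma Fmeasure_setT (Q : {measure set X -> \bar R}) : Fmeasure Q setT = Q setT.
Proof.
pose w i y := (fun z => (alpha i y z)%:E) \_ (landing i y setT).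
have mw i y : measurable_fun setT (w i y).
  apply/(measurable_restrictT _ (measurable_landing i y measurableT)).
  exact: measurable_alphaE.
have w_ge0 i y z : 0 <= w i y z.
  by rewrite /w patchE; case: ifP => // _; exact: alphaE_ge0.
(* only the action [g z] is active at [z] *)
have w_sum z : \sum_i \sum_(y < m) w i y z = 1.
  rewrite (bigD1 (g z)) //= [S in _ + S]big1 ?adde0 => [|i giz]; last first.
    apply: big1 => y _; rewrite /w patchE ifF //; apply/negbTE/negP.
    by rewrite inE => -[[/= gzi _] _]; rewrite gzi eqxx in giz.
  rewrite -(alpha_sum1 (g z) z) -sumEFin; apply: eq_bigr => y _.
  rewrite /w patchE; case: ifPn => //; rewrite notin_setE => z_out.
  have := alpha_ge0 (g z) y z; rewrite le_eqVlt => /orP[/eqP <- //|z_pos].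
  by exfalso; apply: z_out.
transitivity (\sum_i \int[Q]_z \sum_(y < m) w i y z).
  apply: eq_bigr => i _; rewrite ge0_integral_sum //.
  by apply: eq_bigr => y _; exact: integral_mkcond.
rewrite -ge0_integral_sum //.
- by under eq_integral do rewrite w_sum; rewrite integral_cst // mul1e.
- by move=> i; exact: emeasurable_sum.
- by move=> i z _; rewrite sume_ge0.
Qed.

Section Fmeasure_finite_measure.
Variable Q : {finite_measure set X -> \bar R}.

Let Fmeasure_fin : fin_num_fun (Fmeasure Q).
Proof.
move=> A mA; apply: (@fin_num_measure_le_setT _ _ _ (Fmeasure Q)) => //.
change (Fmeasure Q setT \is a fin_num).
by have -> : Fmeasure Q setT = Q setT := Fmeasure_setT Q; exact: fin_num_measure.
Qed.

HB.instance Definition _ := Measure_isFinite.Build _ _ _ (Fmeasure Q) Fmeasure_fin.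

Lemma FmeasureE B : measurable B ->
  Fmeasure Q B = (\sum_i \sum_(y < m) \int[Q]_(z in landing i y B) alpha i y z)%:E.
Proof.
move=> mB; rewrite /Fmeasure -sumEFin; apply: eq_bigr => i _.
rewrite -sumEFin; apply: eq_bigr => y _; rewrite /Rintegral fineK //.
apply: (fin_num_integral_bounded (c := 1)) (fin_num_measure _ _ measurableT).
- exact: measurable_landing.
- exact: measurable_funTS (measurable_alpha i y).
- exact: alpha_ge0.
- exact: alpha_le1.
Qed.
End Fmeasure_finite_measure.

Lemma FopE (mu : {charge set X -> \bar R}) B : measurable B ->
  Fop T M g mu B = (\sum_i \sum_(y < m) Rcint (landing i y B) (alpha i y) mu)%:E.
Proof.
move=> mB; rewrite /Fop -sumEFin; apply: eq_bigr => i _.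
rewrite -sumEFin; apply: eq_bigr => y _.
apply: (cintE (c := 1) (measurable_landing i y mB)).
- exact: measurable_funTS (measurable_alpha i y).
- exact: alpha_ge0.
- exact: alpha_le1.
Qed.

Lemma Fop_jordan (mu : {charge set X -> \bar R}) B : measurable B ->
  Fop T M g mu B = Fmeasure (jpos mu) B - Fmeasure (jneg mu) B.
Proof.
move=> mB; rewrite FopE // !FmeasureE // -EFinB /Rcint; congr EFin.
by rewrite -sumrB; apply: eq_bigr => i _; rewrite -sumrB.
Qed.

Lemma Fop_linear (a b : R) (mu nu : {charge set X -> \bar R}) B : measurable B ->
  Fop T M g (cadd (cscale a mu) (cscale b nu)) B =
  a%:E * Fop T M g mu B + b%:E * Fop T M g nu B.
Proof.
move=> mB; rewrite !FopE // -!EFinM -EFinD; congr EFin.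
rewrite !mulr_sumr -big_split; apply: eq_bigr => i _ /=.
rewrite !mulr_sumr -big_split; apply: eq_bigr => y _ /=.
have mL := measurable_landing i y mB.
have mA : measurable_fun (landing i y B) (alpha i y).
  exact: measurable_funTS (measurable_alpha i y).
have a0 := @alpha_ge0 i y; have a1 := @alpha_le1 i y.
by rewrite (RcintD mL mA a0 a1) !(RcintZ mL mA a0 a1).
Qed.

Lemma Fop_charge (mu : {charge set X -> \bar R}) :
  exists nu : {charge set X -> \bar R}, forall B, measurable B -> nu B = Fop T M g mu B.
Proof.
exists (cadd (charge_of_finite_measure (Fmeasure (jpos mu)))
             (cscale (-1) (charge_of_finite_measure (Fmeasure (jneg mu))))).
move=> B mB; rewrite Fop_jordan //.
transitivity (Fmeasure (jpos mu) B + (-1)%:E * Fmeasure (jneg mu) B); first by [].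
by rewrite mulN1e.
Qed.

Lemma Fop_setT (mu : {charge set X -> \bar R}) : Fop T M g mu setT = mu setT.
Proof. by rewrite Fop_jordan // !Fmeasure_setT -charge_jposneg. Qed.

Lemma tv_norm_Fop_le (mu : {charge set X -> \bar R}) :
  tv_norm (Fop T M g mu) <= tv_norm mu.
Proof.
apply: (@le_trans _ _ (Fmeasure (jpos mu) setT + Fmeasure (jneg mu) setT)).
  by apply: tv_norm_diff_le => B mB; exact: Fop_jordan.
by rewrite !Fmeasure_setT; exact: jordan_le_tv_norm.
Qed.
End belief_transition.

Theorem lemma2p23 (R : realType) (n m : nat) (O : finType)
  (T : 'M[R]_n.+1) (M : O -> 'M[R]_(n.+1, m)) (g : PS R n -> O) :
  stochastic T -> (forall i, stochastic (M i)) ->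
  (forall i : O, measurable (g @^-1` [set i])) ->
  [/\
   (* F maps M(P(S)) into M(P(S)) *)
   (forall mu : {charge set PS R n -> \bar R},
      exists nu : {charge set PS R n -> \bar R},
        forall B, measurable B -> nu B = Fop T M g mu B),
   (* F is linear *)
   (forall (a b : R) (mu nu : {charge set PS R n -> \bar R}) (B : set (PS R n)),
      measurable B ->
      Fop T M g (cadd (cscale a mu) (cscale b nu)) B
      = (a%:E * Fop T M g mu B + b%:E * Fop T M g nu B)%E) &
   (* operator norm w.r.t. the total variation norm equals 1 *)
   ereal_sup [set tv_norm (Fop T M g mu) |
                mu in [set mu : {charge set PS R n -> \bar R} |
                        (tv_norm mu <= 1)%E]] = 1%E].
Proof.
move=> hT hM hg; split; first exact: Fop_charge.
  by move=> a b mu nu B mB; exact: Fop_linear.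
apply/eqP; rewrite eq_le; apply/andP; split.
  apply: ub_ereal_sup => _ [mu mu_le1 <-].
  exact: le_trans (tv_norm_Fop_le hT hM hg mu) mu_le1.
pose delta := charge_of_finite_measure (@dirac _ _ (point : PS R n) R).
apply: (@le_trans _ _ (tv_norm (Fop T M g delta))).
  apply: le_trans (abs_le_tv_norm _).
  have -> : Fop T M g delta setT = 1%E by rewrite Fop_setT //; exact: diracT.
  by rewrite abse1.
apply: ereal_sup_ubound; exists delta => //.
change (tv_norm (@dirac _ _ (point : PS R n) R) <= 1)%E.
by rewrite tv_norm_measure le_eqVlt; apply/orP; left; apply/eqP; exact: diracT.
Qed.
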